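(* For all $n\ge 1$, \[ v_{n,i}=\begin{cases}(2n-i)\,v_{n-1,i}+(i-1)\,v_{n-1,i-1}, & 1\le i\le 2n,\\ (2n-1)!!, & i=2n+1,\end{cases} \] where $v_{m,i}=0$ whenever $i<1$ or $i>2m+1$, and $v_{0,1}=0$.
   Context: For $n\ge 0$, let $\mathcal{C}^*_{n,1}$ be the set of fillings, bijectively with the integers $1,\dots,2n+1$, of the three-row shape having one top-row cell in column $1$, middle-row cells in columns $1,\dots,n$ and bottom-row cells in columns $1,\dots,n$, such that entries increase from left to right along the middle row and from bottom to top within each column, with no condition among entries of the bottom row. (For $n=0$ the shape is not admissible since the top cell has no cell below it, so $\mathcal{C}^*_{0,1}=\emptyset$.) For $1\le i\le 2n+1$, $v_{n,i}$ is the number of elements of $\mathcal{C}^*_{n,1}$ whose top cell contains $i$. Here $(2n-1)!!=1\cdot3\cdots(2n-1)$. *)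

From mathcomp Require Import all_boot.
Set Implicit Arguments. Unset Strict Implicit. Unset Printing Implicit Defensive.

(* Cells of the three-row shape of C*_{n,1}:
   - [inl tt]            : the unique top-row cell (column 1);
   - [inr (j, true)]     : middle-row cell in column j+1 (j : 'I_n);
   - [inr (j, false)]    : bottom-row cell in column j+1. *)
Definition cell (n : nat) : finType := (unit + ('I_n * bool))%type.

Definition top_cell n : cell n := inl tt.
Definition mid_cell n (j : 'I_n) : cell n := inr (j, true).
Definition bot_cell n (j : 'I_n) : cell n := inr (j, false).

(* A filling is a function from cells to 'I_(2n+1); the cell c holds the
   integer (f c).+1 in {1,...,2n+1}.  Injectivity = bijectivity here since
   #|cell n| = 2n+1. *)
Definition is_filling n (f : {ffun cell n -> 'I_(2 * n + 1)}) : bool :=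
  [&& injectiveb f,
      [forall j : 'I_n, forall k : 'I_n, (j < k)%N ==> (f (mid_cell j) < f (mid_cell k))%N],
      [forall j : 'I_n, (f (bot_cell j) < f (mid_cell j))%N] &
      [forall j : 'I_n, (val j == 0%N) ==> (f (mid_cell j) < f (top_cell n))%N]].

(* v_{n,i}: number of elements of C*_{n,1} whose top cell contains i.
   For n = 0 the shape is not admissible, so C*_{0,1} is empty. *)
Definition v (n i : nat) : nat :=
  if n == 0%N then 0%N
  else #|[pred f : {ffun cell n -> 'I_(2 * n + 1)} |
            is_filling f && ((f (top_cell n)).+1 == i)]|.

Definition dfact_odd (n : nat) : nat := \prod_(k < n) (2 * k + 1).

From mathcomp Require Import all_boot zify.

Set Implicit Arguments.
Unset Strict Implicit.
Unset Printing Implicit Defensive.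

(* Use entries 0, ..., 2n+2, so that v_{n+1,i} counts top entry T = i - 1.
   Deleting the last column of a filling with n+1 columns leaves 2n+1 cells
   which, relabelled in increasing order, form a filling with n columns.
   Every non-top cell lies weakly below the middle cell of the last column, so
   that cell holds y, the largest entry other than T; the bottom cell of the
   last column holds any x < y other than T, and conversely each such x and
   smaller filling reassemble uniquely.  For T < 2n+2 we have y = 2n+2 and
   relabelling sends T to T - 1 if x < T and keeps it otherwise, so counting
   the x on both sides of T gives the recurrence; for T = 2n+2 we have
   y = 2n+1 and every x < y sends T to 2n, which iterates to (2n+1)!!. *)

(* For x < y, [bump2 x y] enumerates nat minus {x, y} in increasing order. *)
Definition bump2 x y a := bump y (bump x a).
Definition unbump2 x y a := unbump x (unbump y a).

Lemma bump2K x y : cancel (bump2 x y) (unbump2 x y).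
Proof. by move=> a; rewrite /bump2 /unbump2 !bumpK. Qed.

Lemma ltn_bump2 x y : {mono bump2 x y : a b / a < b}.
Proof. by move=> a b; rewrite /bump2 /bump; lia. Qed.

Lemma bump2_neq_x x y a : x < y -> bump2 x y a != x.
Proof. by rewrite /bump2 /bump; lia. Qed.

Lemma bump2_neq_y x y a : bump2 x y a != y.
Proof. by rewrite eq_sym neq_bump. Qed.

Lemma unbump2K x y a : x < y -> a != x -> a != y -> bump2 x y (unbump2 x y a) = a.
Proof. by rewrite /bump2 /unbump2 /bump /unbump; lia. Qed.

Lemma bump2_ltn x y a m : a < m -> bump2 x y a < m.+2.
Proof. by rewrite /bump2 /bump; lia. Qed.

Lemma unbump2_ltn x y a m :
  x < y -> y < m.+2 -> a != x -> a != y -> a < m.+2 -> unbump2 x y a < m.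
Proof. by rewrite /unbump2 /unbump; lia. Qed.

Definition max_but m t := if t == m then m.-1 else m.

Lemma max_but_neq m t : 0 < m -> max_but m t != t.
Proof. by rewrite /max_but; case: (t =P m); lia. Qed.

Lemma max_but_leq m t : max_but m t <= m.
Proof. by rewrite /max_but; case: (t =P m); lia. Qed.

Lemma leq_max_but m t a : a <= m -> a != t -> a <= max_but m t.
Proof. by rewrite /max_but; case: (t =P m); lia. Qed.

Lemma card_cell n : #|cell n| = 2 * n + 1.
Proof. by rewrite card_sum card_unit card_prod card_ord card_bool addnC mulnC. Qed.

(* [inord] needs a bound of the form m.+1, which [2 * n + 1] is not for a
   variable n. *)
Definition inordD1 m a : 'I_(m + 1) := cast_ord (esym (addn1 m)) (inord a).

Arguments inordD1 : simpl never.

Lemma inordD1K m a : a < m + 1 -> inordD1 m a = a :> nat.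
Proof. by move=> lt_am; rewrite /inordD1 /= inordK //; lia. Qed.

Definition filling n := {ffun cell n -> 'I_(2 * n + 1)}.

Definition fillings_top n t :=
  [set f : filling n | is_filling f && (f (top_cell n) == t :> nat)].

Lemma fillingP n (f : filling n) : reflect
  [/\ injective f,
      forall j k : 'I_n, j < k -> f (mid_cell j) < f (mid_cell k),
      forall j : 'I_n, f (bot_cell j) < f (mid_cell j) &
      forall j : 'I_n, j = 0 :> nat -> f (mid_cell j) < f (top_cell n)]
  (is_filling f).
Proof.
apply: (iffP and4P) => [[/injectiveP inj_f /forallP mid /forallP col /forallP top]|].
  split=> // [j k lt_jk | j /eqP j0]; last exact: implyP (top j) j0.
  exact: implyP (forallP (mid j) k) lt_jk.
case=> /injectiveP inj_f mid col top; split=> //; apply/forallP => j.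
- by apply/forallP => k; apply/implyP; apply: mid.
- exact: col.
- by apply/implyP => /eqP; apply: top.
Qed.

Lemma v_card n t : 0 < n -> v n t.+1 = #|fillings_top n t|.
Proof. by case: n => // n _; apply: eq_card => f; rewrite !inE eqSS. Qed.

Definition lift_cell n (c : cell n) : cell n.+1 :=
  if c is inr (j, b) then inr (lift ord_max j, b) else top_cell n.+1.

Lemma lift_cell_inj n : injective (@lift_cell n).
Proof.
by move=> [[]|[j1 b1]] [[]|[j2 b2]] //= [/(can_inj (bumpK n))/val_inj -> ->].
Qed.

Lemma lift_cell_neq_last n (c : cell n) b : lift_cell c != inr (ord_max, b).
Proof.
by case: c => [[]|[j b']] //=; apply/eqP => -[]; rewrite /bump; have := ltn_ord j; lia.
Qed.

Variant lift_cell_spec n : cell n.+1 -> Type :=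
  | LiftCell (c : cell n) : lift_cell_spec (lift_cell c)
  | MidLast : lift_cell_spec (mid_cell ord_max)
  | BotLast : lift_cell_spec (bot_cell ord_max).

Lemma lift_cellP n (c : cell n.+1) : lift_cell_spec c.
Proof.
case: c => [[]|[j b]]; first exact: (LiftCell (top_cell n)).
case: (unliftP ord_max j) => [j' ->|->]; first exact: (LiftCell (inr (j', b))).
by case: b; constructor.
Qed.

Lemma filling_le_mid_last n (f : filling n.+1) c :
  is_filling f -> c != top_cell n.+1 -> f c <= f (mid_cell ord_max).
Proof.
case/fillingP => _ mid col _ c_top.
have le_mid j : f (mid_cell j) <= f (mid_cell ord_max).
  have [-> // | ne_j] := eqVneq j ord_max.
  by apply/ltnW/mid; rewrite ltn_neqAle -ltnS ltn_ord andbT.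
case: c c_top => [[//]|[j [|]]] _; first exact: le_mid.
exact: leq_trans (ltnW (col j)) (le_mid j).
Qed.

Lemma filling_mid_last n (f : filling n.+1) : is_filling f ->
  (f (mid_cell ord_max) : nat) = max_but (2 * n.+1) (f (top_cell n.+1)).
Proof.
move=> fill_f; have /fillingP[inj_f _ _ _] := fill_f.
set T := (f (top_cell n.+1) : nat); set y := max_but _ T.
have lt_y : y < 2 * n.+1 + 1 by rewrite addn1 ltnS max_but_leq.
have [c fc] : exists c, (f c : nat) = y.
  have card_le : #|'I_(2 * n.+1 + 1)| <= #|cell n.+1| by rewrite card_ord card_cell.
  have /codomP[c fc] := inj_card_onto inj_f card_le (Ordinal lt_y).
  by exists c; rewrite -fc.
apply/eqP; rewrite eqn_leq -{2}fc filling_le_mid_last // ?andbT; last first.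
  apply: contra_neq (max_but_neq T (isT : 0 < 2 * n.+1)) => c_top.
  by rewrite -/y -fc c_top.
apply: leq_max_but; first by have := ltn_ord (f (mid_cell ord_max)); lia.
by apply/eqP => /val_inj /inj_f.
Qed.

Section LastColumn.

Variables n T : nat.
Local Notation y := (max_but (2 * n.+1) T).

Let neq_yT : y != T. Proof. by apply: max_but_neq. Qed.

Definition extend (x : 'I_(2 * n.+1 + 1)) (g : filling n) : filling n.+1 :=
  [ffun c => match c with
   | inl _ => inordD1 _ (bump2 x y (g (top_cell n)))
   | inr (j, b) =>
       if unlift ord_max j is Some j' then inordD1 _ (bump2 x y (g (inr (j', b))))
       else if b then inordD1 _ y else x
   end].

Definition shrink (f : filling n.+1) : filling n :=
  [ffun c => inordD1 _ (unbump2 (f (bot_cell ord_max)) y (f (lift_cell c)))].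

Lemma extend_lift x g c : extend x g (lift_cell c) = bump2 x y (g c) :> nat.
Proof.
have lt_bump2 : bump2 x y (g c) < 2 * n.+1 + 1.
  by have := bump2_ltn x y (ltn_ord (g c)); lia.
case: c lt_bump2 => [[]|[j b]] lt_bump2; rewrite ffunE; cbn -[inordD1 bump2].
  by rewrite inordD1K.
by rewrite liftK inordD1K.
Qed.

Lemma extend_mid_last x g : extend x g (mid_cell ord_max) = y :> nat.
Proof. by rewrite ffunE /= unlift_none inordD1K // addn1 ltnS max_but_leq. Qed.

Lemma extend_bot_last x g : extend x g (bot_cell ord_max) = x.
Proof. by rewrite ffunE /= unlift_none. Qed.

Lemma shrink_extend x g : shrink (extend x g) = g.
Proof.
apply/ffunP => c; apply: ord_inj.
by rewrite ffunE extend_bot_last extend_lift bump2K inordD1K.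
Qed.

Section Extend.

Variables (x : 'I_(2 * n.+1 + 1)) (g : filling n).
Hypotheses (lt_xy : x < y) (neq_xT : x != T :> nat).
Hypotheses (fill_g : is_filling g) (g_top : g (top_cell n) = unbump2 x y T :> nat).

Let bump2_g_top : bump2 x y (g (top_cell n)) = T.
Proof. by rewrite g_top unbump2K // eq_sym. Qed.

Lemma extend_top : extend x g (top_cell n.+1) = T :> nat.
Proof. by rewrite (extend_lift x g (top_cell n)). Qed.

Lemma extend_lift_lt c : c != top_cell n -> bump2 x y (g c) < y.
Proof.
move=> c_top; have /fillingP[inj_g _ _ _] := fill_g.
rewrite ltn_neqAle bump2_neq_y leq_max_but //.
  by have := bump2_ltn x y (ltn_ord (g c)); lia.
apply: contra_neq c_top => E; apply/inj_g/ord_inj/(can_inj (bump2K x y)).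
by rewrite E bump2_g_top.
Qed.

Lemma extend_inj : injective (extend x g).
Proof.
have /fillingP[inj_g _ _ _] := fill_g.
move=> c1 c2 /(congr1 (@nat_of_ord _)).
case: (lift_cellP c1) => [c1'||]; case: (lift_cellP c2) => [c2'||];
  rewrite ?extend_lift ?extend_mid_last ?extend_bot_last //.
- by move/(can_inj (bump2K x y))/val_inj/inj_g ->.
- by move/eqP; rewrite (negPf (bump2_neq_y _ _ _)).
- by move/eqP; rewrite (negPf (bump2_neq_x _ lt_xy)).
- by move/esym/eqP; rewrite (negPf (bump2_neq_y _ _ _)).
- by move=> E; move: lt_xy; rewrite E ltnn.
- by move/esym/eqP; rewrite (negPf (bump2_neq_x _ lt_xy)).
- by move=> E; move: lt_xy; rewrite E ltnn.
Qed.

(* When n = 0 the new column is the first one, so its middle entry y must lie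
   below the top entry T, which only happens for T maximal. *)
Hypothesis top_new : (0 < n) || (T == 2 * n.+1).

Lemma extend_filling : is_filling (extend x g).
Proof.
have /fillingP[_ mid_g col_g top_g] := fill_g.
apply/fillingP; split; first exact: extend_inj.
- move=> j k; case: (unliftP ord_max j) => [j' ->|->]; last by rewrite ltnNge leq_ord.
  case: (unliftP ord_max k) => [k' ->|->]; rewrite !lift_max => lt_jk.
    rewrite (extend_lift x g (mid_cell j')) (extend_lift x g (mid_cell k')).
    by rewrite ltn_bump2 mid_g.
  by rewrite (extend_lift x g (mid_cell j')) extend_mid_last extend_lift_lt.
- move=> j; case: (unliftP ord_max j) => [j' ->|->].
    by rewrite (extend_lift x g (mid_cell j')) (extend_lift x g (bot_cell j')) ltn_bump2.
  by rewrite extend_mid_last extend_bot_last.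
- move=> j; case: (unliftP ord_max j) => [j' -> | -> /= n0].
    rewrite lift_max => j0; rewrite (extend_lift x g (mid_cell j')).
    by rewrite (extend_lift x g (top_cell n)) ltn_bump2 top_g.
  rewrite extend_mid_last extend_top /max_but.
  by move: top_new; case: (T =P 2 * n.+1); rewrite ?orbF; lia.
Qed.

End Extend.

Section Shrink.

Variable f : filling n.+1.
Hypotheses (fill_f : is_filling f) (f_top : f (top_cell n.+1) = T :> nat).
Local Notation x := (f (bot_cell ord_max)).

Lemma mid_last_max : f (mid_cell ord_max) = y :> nat.
Proof. by rewrite filling_mid_last // f_top. Qed.

Lemma bot_last_lt : x < y.
Proof. by have /fillingP[_ _ col _] := fill_f; rewrite -mid_last_max col. Qed.

Lemma bot_last_neq_top : x != T :> nat.
Proof.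
by have /fillingP[inj_f _ _ _] := fill_f; rewrite -f_top; apply/eqP => /val_inj/inj_f.
Qed.

Lemma lift_neq_last c :
  (f (lift_cell c) != x :> nat) && (f (lift_cell c) != y :> nat).
Proof.
have /fillingP[inj_f _ _ _] := fill_f.
rewrite -mid_last_max; apply/andP; split; apply/eqP => /ord_inj/inj_f/eqP;
  exact: (negP (lift_cell_neq_last _ _)).
Qed.

Lemma shrink_lift c : shrink f c = unbump2 x y (f (lift_cell c)) :> nat.
Proof.
case/andP: (lift_neq_last c) => neq_x neq_y.
rewrite ffunE inordD1K // (unbump2_ltn bot_last_lt) //.
- by have := max_but_leq (2 * n.+1) T; lia.
- by have := ltn_ord (f (lift_cell c)); lia.
Qed.

Lemma shrink_filling : is_filling (shrink f).
Proof.
have /fillingP[inj_f mid_f col_f top_f] := fill_f.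
have ltn_unbump2 c c' :
    (shrink f c < shrink f c') = (f (lift_cell c) < f (lift_cell c')).
  case/andP: (lift_neq_last c) => ? ?; case/andP: (lift_neq_last c') => ? ?.
  by rewrite !shrink_lift -(ltn_bump2 x y) !unbump2K // bot_last_lt.
apply/fillingP; split.
- move=> c c' /(congr1 (@nat_of_ord _)); rewrite !shrink_lift => E.
  apply/lift_cell_inj/inj_f/ord_inj.
  case/andP: (lift_neq_last c) => ? ?; case/andP: (lift_neq_last c') => ? ?.
  by rewrite -[LHS](unbump2K bot_last_lt) // E unbump2K // bot_last_lt.
- by move=> j k lt_jk; rewrite ltn_unbump2 mid_f // !lift_max.
- by move=> j; rewrite ltn_unbump2 col_f.
- by move=> j j0; rewrite (ltn_unbump2 (mid_cell j) (top_cell n)) top_f // lift_max.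
Qed.

Lemma shrink_top : shrink f (top_cell n) = unbump2 x y T :> nat.
Proof. by rewrite (shrink_lift (top_cell n)) f_top. Qed.

Lemma extend_shrink : extend x (shrink f) = f.
Proof.
apply/ffunP => c; apply: ord_inj; case: (lift_cellP c) => [c'||].
- case/andP: (lift_neq_last c') => ? ?.
  by rewrite extend_lift shrink_lift unbump2K // bot_last_lt.
- by rewrite extend_mid_last mid_last_max.
- by rewrite extend_bot_last.
Qed.

End Shrink.

Definition last_col_pairs := [set p : 'I_(2 * n.+1 + 1) * filling n |
  [&& p.1 != T :> nat, p.1 < y & p.2 \in fillings_top n (unbump2 p.1 y T)]].

Lemma card_fillings_top_pairs :
  (0 < n) || (T == 2 * n.+1) -> #|fillings_top n.+1 T| = #|last_col_pairs|.
Proof.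
move=> top_new.
have -> : fillings_top n.+1 T = [set extend p.1 p.2 | p in last_col_pairs].
  apply/setP => f; rewrite inE; apply/idP/imsetP => [/andP[fill_f /eqP f_top] | [[x g]]].
    exists (f (bot_cell ord_max), shrink f); last by rewrite extend_shrink.
    by rewrite !inE bot_last_lt ?bot_last_neq_top ?shrink_filling //= shrink_top.
  rewrite !inE /= => /and3P[neq_xT lt_xy /andP[fill_g /eqP g_top]] ->.
  by rewrite extend_filling // extend_top // eqxx.
apply: card_in_imset => -[x g] [x1 g1] _ _ /= E.
have := congr1 (fun f : filling n.+1 => (f (bot_cell ord_max), shrink f)) E.
by rewrite /= !extend_bot_last !shrink_extend.
Qed.

Lemma card_last_col_pairs :
  #|last_col_pairs| = \sum_(0 <= x < y | x != T) #|fillings_top n (unbump2 x y T)|.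
Proof.
rewrite big_mkord (big_ord_widen_cond (2 * n.+1 + 1) (fun x => x != T)
  (fun x => #|fillings_top n (unbump2 x y T)|)); last first.
  by have := max_but_leq (2 * n.+1) T; lia.
under eq_bigr do rewrite -sum1_card.
rewrite pair_big_dep -sum1_card; apply: eq_bigl => -[x g].
by rewrite inE andbA.
Qed.

End LastColumn.

Lemma sum_unbump m t (F : nat -> nat) : t < m ->
  \sum_(0 <= x < m | x != t) F (unbump x t) = t * F t.-1 + (m - t.+1) * F t.
Proof.
move=> lt_tm.
have sum_const a b c : (forall x, a <= x < b -> x != t /\ F (unbump x t) = c) ->
    \sum_(a <= x < b | x != t) F (unbump x t) = (b - a) * c.
  move=> Fc; rewrite big_mkcond (eq_big_nat _ _ (F2 := fun=> c)) ?sum_nat_const_nat //.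
  by move=> x /Fc[-> ->].
rewrite (big_cat_nat (leq0n t) (ltnW lt_tm)) (big_ltn_cond lt_tm) eqxx /=.
rewrite (sum_const 0 t (F t.-1)) ?subn0 ?(sum_const t.+1 m (F t)) // => x /andP[? ?];
  by rewrite /unbump; split; [lia | congr F; lia].
Qed.

Lemma card_fillings_top_rec n T : 0 < n -> T < 2 * n.+1 ->
  #|fillings_top n.+1 T| =
    T * #|fillings_top n T.-1| + (2 * n.+1 - T.+1) * #|fillings_top n T|.
Proof.
move=> n_gt0 lt_T; rewrite card_fillings_top_pairs ?n_gt0 // card_last_col_pairs.
have -> : max_but (2 * n.+1) T = 2 * n.+1 by rewrite /max_but ltn_eqF.
rewrite -(sum_unbump (fun t => #|fillings_top n t|) lt_T).
by apply: eq_bigr => x _; rewrite /unbump2 [unbump _ T]/unbump ltnNge (ltnW lt_T) subn0.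
Qed.

Lemma card_fillings_top_max n :
  #|fillings_top n.+1 (2 * n.+1)| = (2 * n.+1).-1 * #|fillings_top n (2 * n)|.
Proof.
rewrite card_fillings_top_pairs ?eqxx ?orbT // card_last_col_pairs /max_but eqxx.
rewrite big_mkcond (eq_big_nat _ _ (F2 := fun=> #|fillings_top n (2 * n)|)).
  by rewrite sum_nat_const_nat subn0.
move=> x /andP[_ lt_x]; have -> : x != 2 * n.+1 by lia.
by congr #|fillings_top n _|; rewrite /unbump2 /unbump; lia.
Qed.

Lemma card_fillings_top0 : #|fillings_top 0 0| = 1.
Proof.
have -> : fillings_top 0 0 = [set: filling 0].
  apply/setP => f; rewrite !inE; apply/andP; split; last by case: (f _) => -[].
  by apply/fillingP; split=> [[[]|[[]//]] [[]|[[]//]] | [] | [] | []].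
by rewrite cardsT card_ffun card_ord exp1n.
Qed.

Lemma card_fillings_top_lt2 n T : T < 2 -> #|fillings_top n.+1 T| = 0.
Proof.
move=> lt_T2; apply: eq_card0 => f; rewrite !inE.
apply/negbTE/negP => /andP[/fillingP[_ _ col top] /eqP f_top].
by have := col ord0; have := top ord0 erefl; lia.
Qed.

Lemma card_fillings_top_dfact n : #|fillings_top n (2 * n)| = dfact_odd n.
Proof.
elim: n => [|n IHn]; first by rewrite card_fillings_top0 /dfact_odd big_ord0.
by rewrite card_fillings_top_max IHn /dfact_odd big_ord_recr mulnC /=; congr (_ * _); lia.
Qed.

Theorem lemma19 (n : nat) : (1 <= n)%N ->
  (forall i : nat, (1 <= i <= 2 * n)%N ->
     v n i = ((2 * n - i) * v n.-1 i + (i - 1) * v n.-1 (i - 1))%N) /\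
  v n (2 * n + 1) = dfact_odd n.
Proof.
case: n => // n _; split=> [[//|T] /andP[_ le_T] | ]; last first.
  by rewrite addn1 v_card // card_fillings_top_dfact.
rewrite v_card // subn1 /=.
case: n le_T => [|n] le_T; first by rewrite card_fillings_top_lt2 // /v /= !muln0.
rewrite card_fillings_top_rec // addnC.
by case: T le_T => [|T] _; rewrite ?mul0n !v_card.
Qed.
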